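(* Let $(K,*,\circ)$ be a left skew brace and let $G\subseteq K$ be a sub-skew brace (a subset which is a subgroup of both $(K,* )$ and $(K,\circ)$), with inclusion $i\colon G\to K$. Then $i$ is a normal subobject in the category $\mathsf{SKB}$ of left skew braces if and only if the following three conditions hold: (1) $G$ is a normal subgroup of $(K,* )$; (2) $G$ is a normal subgroup of $(K,\circ)$; (3') $\lambda_x(G)=G$ for all $x\in K$.
   Context: A (left) skew brace is a triple $(A,*,\circ)$ with $(A,* )$ and $(A,\circ)$ groups such that $a\circ(b*c)=(a\circ b)*a^{-*}*(a\circ c)$ for all $a,b,c\in A$; here $a^{-*}$ and $a^{-\circ}$ denote inverses in $(A,* )$ and $(A,\circ)$. The two groups have the same identity $1$. Morphisms in $\mathsf{SKB}$ are maps that are homomorphisms for both operations. For $a,u\in A$ put $\lambda_a(u)=a^{-*}*(a\circ u)$. A congruence on $K$ is an equivalence relation $R\subseteq K\times K$ that is a sub-skew brace of the product skew brace $K\times K$ (componentwise operations). A sub-skew brace $G\subseteq K$ is called normal (normal subobject in $\mathsf{SKB}$) if there is a congruence $R$ on $K$ such that $G$ is exactly the $R$-equivalence class of $1$ (equivalently, in categorical terms, the inclusion is normal to some internal equivalence relation $R$: the restriction of $R$ to $G$ is $G\times G$ and whenever $g\in G$ and $(g,y)\in R$ then $y\in G$). *)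

Record skew_brace := SkewBrace {
  sb_carrier :> Type;
  sb_star : sb_carrier -> sb_carrier -> sb_carrier;
  sb_circ : sb_carrier -> sb_carrier -> sb_carrier;
  sb_one  : sb_carrier;
  sb_sinv : sb_carrier -> sb_carrier;
  sb_cinv : sb_carrier -> sb_carrier;
  sb_starA : forall a b c, sb_star a (sb_star b c) = sb_star (sb_star a b) c;
  sb_star1l : forall a, sb_star sb_one a = a;
  sb_star1r : forall a, sb_star a sb_one = a;
  sb_starVl : forall a, sb_star (sb_sinv a) a = sb_one;
  sb_starVr : forall a, sb_star a (sb_sinv a) = sb_one;
  sb_circA : forall a b c, sb_circ a (sb_circ b c) = sb_circ (sb_circ a b) c;
  sb_circ1l : forall a, sb_circ sb_one a = a;
  sb_circ1r : forall a, sb_circ a sb_one = a;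
  sb_circVl : forall a, sb_circ (sb_cinv a) a = sb_one;
  sb_circVr : forall a, sb_circ a (sb_cinv a) = sb_one;
  sb_compat : forall a b c,
    sb_circ a (sb_star b c) = sb_star (sb_circ a b) (sb_star (sb_sinv a) (sb_circ a c))
}.

Arguments sb_star {s}.
Arguments sb_circ {s}.
Arguments sb_one {s}.
Arguments sb_sinv {s}.
Arguments sb_cinv {s}.

Definition sb_lambda {K : skew_brace} (a u : K) : K :=
  sb_star (sb_sinv a) (sb_circ a u).

Definition sub_skew_brace (K : skew_brace) (G : K -> Prop) : Prop :=
  G sb_one /\
  (forall a b, G a -> G b -> G (sb_star a b)) /\
  (forall a, G a -> G (sb_sinv a)) /\
  (forall a b, G a -> G b -> G (sb_circ a b)) /\
  (forall a, G a -> G (sb_cinv a)).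

(* A congruence: an equivalence relation which is a sub-skew brace of K x K
   (componentwise operations). *)
Definition sb_congruence (K : skew_brace) (R : K -> K -> Prop) : Prop :=
  (forall a, R a a) /\
  (forall a b, R a b -> R b a) /\
  (forall a b c, R a b -> R b c -> R a c) /\
  R sb_one sb_one /\
  (forall a b c d, R a b -> R c d -> R (sb_star a c) (sb_star b d)) /\
  (forall a b, R a b -> R (sb_sinv a) (sb_sinv b)) /\
  (forall a b c d, R a b -> R c d -> R (sb_circ a c) (sb_circ b d)) /\
  (forall a b, R a b -> R (sb_cinv a) (sb_cinv b)).

(* G is a normal subobject in SKB: G is the R-class of 1 for some congruence R. *)
Definition sb_normal_subobject (K : skew_brace) (G : K -> Prop) : Prop :=
  exists R : K -> K -> Prop, sb_congruence K R /\ (forall y, G y <-> R sb_one y).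

(* G is a normal subgroup of (K, * ) (G assumed to be a subgroup) *)
Definition star_normal (K : skew_brace) (G : K -> Prop) : Prop :=
  forall x g, G g -> G (sb_star (sb_star x g) (sb_sinv x)).

Definition circ_normal (K : skew_brace) (G : K -> Prop) : Prop :=
  forall x g, G g -> G (sb_circ (sb_circ x g) (sb_cinv x)).

Definition lambda_invariant (K : skew_brace) (G : K -> Prop) : Prop :=
  forall x y, G y <-> (exists g, G g /\ sb_lambda x g = y).

(* The class of 1 under a congruence is normal in both groups (K, * ) and
   (K, o), and it is stable under lambda_a and under its inverse
   u |-> a^{-o} o (a * u), since both are composites of the operations that
   fix 1.  Conversely, for G normal in (K, * ) the coset relation
   a^{-*} * b \in G is an equivalence compatible with *.  As
   lambda_a (a^{-o} o b) = a^{-*} * b, lambda-invariance of G makes it agree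
   with the relation a^{-o} o b \in G, which is compatible with o because G is
   normal in (K, o); so it is a congruence whose class of 1 is G. *)

From Stdlib Require Import Relations Setoid.

Record group := Group {
  gcarrier :> Type;
  gmul : gcarrier -> gcarrier -> gcarrier;
  gone : gcarrier;
  ginv : gcarrier -> gcarrier;
  gmulA : forall a b c, gmul a (gmul b c) = gmul (gmul a b) c;
  gmul1g : forall a, gmul gone a = a;
  gmulg1 : forall a, gmul a gone = a;
  gmulVg : forall a, gmul (ginv a) a = gone;
  gmulgV : forall a, gmul a (ginv a) = gone
}.

Arguments gmul {g}.
Arguments gone {g}.
Arguments ginv {g}.

Definition star_group (K : skew_brace) : group :=
  Group K sb_star sb_one sb_sinv
    (sb_starA K) (sb_star1l K) (sb_star1r K) (sb_starVl K) (sb_starVr K).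

Definition circ_group (K : skew_brace) : group :=
  Group K sb_circ sb_one sb_cinv
    (sb_circA K) (sb_circ1l K) (sb_circ1r K) (sb_circVl K) (sb_circVr K).

Section GroupTheory.

Variable g : group.

Lemma mulgI (a b c : g) : gmul a b = gmul a c -> b = c.
Proof.
  intro E.
  rewrite <- (gmul1g g b), <- (gmul1g g c), <- (gmulVg g a), <- !gmulA, E.
  reflexivity.
Qed.

Lemma mulKVg (a b : g) : gmul a (gmul (ginv a) b) = b.
Proof. rewrite gmulA, gmulgV, gmul1g. reflexivity. Qed.

Lemma mulgK (a b : g) : gmul (gmul a b) (ginv b) = a.
Proof. rewrite <- gmulA, gmulgV, gmulg1. reflexivity. Qed.

Lemma invgK (a : g) : ginv (ginv a) = a.
Proof. apply (mulgI (ginv a)). rewrite gmulgV, gmulVg. reflexivity. Qed.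

Lemma invMg (a b : g) : ginv (gmul a b) = gmul (ginv b) (ginv a).
Proof.
  apply (mulgI (gmul a b)).
  rewrite gmulgV, <- gmulA, mulKVg, gmulgV. reflexivity.
Qed.

Lemma invg1 : ginv (@gone g) = gone.
Proof. rewrite <- (gmul1g g (ginv gone)). apply gmulgV. Qed.

Definition subgroup (N : g -> Prop) : Prop :=
  N gone /\ (forall a b, N a -> N b -> N (gmul a b)) /\ (forall a, N a -> N (ginv a)).

Definition normal (N : g -> Prop) : Prop :=
  forall x n, N n -> N (gmul (gmul x n) (ginv x)).

Definition compatible (R : relation g) : Prop :=
  (forall a b c d, R a b -> R c d -> R (gmul a c) (gmul b d)) /\
  (forall a b, R a b -> R (ginv a) (ginv b)).

Definition coset_rel (N : g -> Prop) : relation g := fun a b => N (gmul (ginv a) b).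

Lemma compatible_class1_normal (R : relation g) (N : g -> Prop) :
  reflexive g R -> compatible R -> (forall y, N y <-> R gone y) -> normal N.
Proof.
  intros Rrefl [Rmul _] HN x n Nn.
  apply HN; apply HN in Nn.
  pose proof (Rmul _ _ _ _ (Rmul _ _ _ _ (Rrefl x) Nn) (Rrefl (ginv x))) as E.
  rewrite gmulg1, gmulgV in E. exact E.
Qed.

Lemma compatible_ext (R R' : relation g) :
  (forall a b, R a b <-> R' a b) -> compatible R -> compatible R'.
Proof.
  intros E [Rmul Rinv]. split.
  - intros a b c d Hab Hcd. apply E. apply E in Hab, Hcd. auto.
  - intros a b Hab. apply E. apply E in Hab. auto.
Qed.

Section Coset.

Variable N : g -> Prop.
Hypotheses (N_subgroup : subgroup N) (N_normal : normal N).

Lemma coset_rel_equiv : equivalence g (coset_rel N).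
Proof.
  destruct N_subgroup as (N1 & Nmul & Ninv). split.
  - intro a. unfold coset_rel. rewrite gmulVg. exact N1.
  - intros a b c Hab Hbc. unfold coset_rel in *.
    rewrite <- (mulKVg b c), gmulA. auto.
  - intros a b Hab. unfold coset_rel in *.
    rewrite <- (invgK a), <- invMg. auto.
Qed.

Lemma coset_rel_compatible : compatible (coset_rel N).
Proof.
  destruct N_subgroup as (N1 & Nmul & Ninv). unfold coset_rel. split.
  - intros a b c d Hab Hcd.
    pose proof (N_normal (ginv c) _ Hab) as Hc. rewrite invgK in Hc.
    replace (gmul (ginv (gmul a c)) (gmul b d))
      with (gmul (gmul (gmul (ginv c) (gmul (ginv a) b)) c) (gmul (ginv c) d)).
    + auto.
    + rewrite invMg, !gmulA, mulgK. reflexivity.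
  - intros a b Hab.
    pose proof (N_normal a _ (Ninv _ Hab)) as Ha.
    rewrite invMg, invgK, gmulA, mulgK in Ha. rewrite invgK. exact Ha.
Qed.

Lemma coset_rel_class1 (y : g) : coset_rel N gone y <-> N y.
Proof. unfold coset_rel. rewrite invg1, gmul1g. reflexivity. Qed.

End Coset.

End GroupTheory.

Section SkewBrace.

Variable K : skew_brace.

Lemma sub_skew_brace_star_subgroup (G : K -> Prop) :
  sub_skew_brace K G -> subgroup (star_group K) G.
Proof. intros (G1 & Gstar & Gsinv & _ & _). split; auto. Qed.

Lemma sub_skew_brace_circ_subgroup (G : K -> Prop) :
  sub_skew_brace K G -> subgroup (circ_group K) G.
Proof. intros (G1 & _ & _ & Gcirc & Gcinv). split; auto. Qed.

Lemma sb_congruenceP (R : relation K) :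
  sb_congruence K R <->
  equivalence K R /\ compatible (star_group K) R /\ compatible (circ_group K) R.
Proof.
  split.
  - intros (Rrefl & Rsym & Rtrans & _ & Rstar & Rsinv & Rcirc & Rcinv).
    repeat split; assumption.
  - intros ([Rrefl Rtrans Rsym] & [Rstar Rsinv] & [Rcirc Rcinv]).
    repeat split; auto.
Qed.

Definition sb_lambda_inv (a u : K) : K := sb_circ (sb_cinv a) (sb_star a u).

Lemma sb_lambdaK (a u : K) : sb_lambda_inv a (sb_lambda a u) = u.
Proof.
  unfold sb_lambda, sb_lambda_inv.
  rewrite sb_starA, sb_starVr, sb_star1l, sb_circA, sb_circVl, sb_circ1l.
  reflexivity.
Qed.

Lemma sb_lambda_invK (a u : K) : sb_lambda a (sb_lambda_inv a u) = u.
Proof.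
  unfold sb_lambda, sb_lambda_inv.
  rewrite sb_circA, sb_circVr, sb_circ1l, sb_starA, sb_starVl, sb_star1l.
  reflexivity.
Qed.

Lemma sb_lambda1 (a : K) : sb_lambda a sb_one = sb_one.
Proof. unfold sb_lambda. rewrite sb_circ1r, sb_starVl. reflexivity. Qed.

Lemma sb_lambda_inv1 (a : K) : sb_lambda_inv a sb_one = sb_one.
Proof. unfold sb_lambda_inv. rewrite sb_star1r, sb_circVl. reflexivity. Qed.

Lemma sb_lambda_inv_coset (a b : K) :
  sb_lambda_inv a (sb_star (sb_sinv a) b) = sb_circ (sb_cinv a) b.
Proof.
  unfold sb_lambda_inv. rewrite sb_starA, sb_starVr, sb_star1l. reflexivity.
Qed.

Lemma lambda_invariantP (G : K -> Prop) :
  lambda_invariant K G <-> (forall a u, G (sb_lambda a u) <-> G u).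
Proof.
  split.
  - intros HG a u. split.
    + intro Hu. destruct (proj1 (HG a _) Hu) as [v [Gv E]].
      rewrite <- (sb_lambdaK a u), <- E, sb_lambdaK. exact Gv.
    + intro Gu. apply (HG a). exists u. auto.
  - intros HG a y. split.
    + intro Gy. exists (sb_lambda_inv a y). rewrite <- HG, !sb_lambda_invK. auto.
    + intros [v [Gv <-]]. apply HG. exact Gv.
Qed.

Lemma lambda_stable_coset_rel (G : K -> Prop) :
  (forall a u, G (sb_lambda a u) <-> G u) ->
  forall a b, coset_rel (star_group K) G a b <-> coset_rel (circ_group K) G a b.
Proof.
  intros HG a b. unfold coset_rel; cbn.
  rewrite <- sb_lambda_inv_coset, <- (HG a (sb_lambda_inv a _)), sb_lambda_invK.
  reflexivity.
Qed.

Lemma sb_congruence_class1_lambda (R : relation K) :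
  sb_congruence K R -> forall a u, R sb_one (sb_lambda a u) <-> R sb_one u.
Proof.
  intros (Rrefl & _ & _ & _ & Rstar & _ & Rcirc & _) a.
  assert (Rlambda : forall u v, R u v -> R (sb_lambda a u) (sb_lambda a v))
    by (intros; apply Rstar, Rcirc; auto).
  assert (Rlambda_inv : forall u v, R u v -> R (sb_lambda_inv a u) (sb_lambda_inv a v))
    by (intros; apply Rcirc, Rstar; auto).
  intro u. split; intro Hu.
  - rewrite <- (sb_lambda_inv1 a), <- (sb_lambdaK a u). auto.
  - rewrite <- (sb_lambda1 a). auto.
Qed.

End SkewBrace.

Theorem proposition2p4 (K : skew_brace) (G : K -> Prop) :
  sub_skew_brace K G ->
  (sb_normal_subobject K G <->
     (star_normal K G /\ circ_normal K G /\ lambda_invariant K G)).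
Proof.
  intro Gsub. split.
  - intros [R [HR HGR]].
    destruct (proj1 (sb_congruenceP K R) HR) as ([Rrefl _ _] & Rstar & Rcirc).
    split; [|split].
    + exact (compatible_class1_normal (star_group K) R G Rrefl Rstar HGR).
    + exact (compatible_class1_normal (circ_group K) R G Rrefl Rcirc HGR).
    + apply lambda_invariantP. intros a u.
      rewrite !HGR. apply sb_congruence_class1_lambda. exact HR.
  - intros (Gstar & Gcirc & Glambda). rewrite lambda_invariantP in Glambda.
    exists (coset_rel (star_group K) G). split.
    + apply sb_congruenceP. split; [|split].
      * exact (coset_rel_equiv _ _ (sub_skew_brace_star_subgroup K G Gsub)).
      * exact (coset_rel_compatible _ _
                 (sub_skew_brace_star_subgroup K G Gsub) Gstar).
      * apply (compatible_ext _ (coset_rel (circ_group K) G)).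
        -- intros a b. symmetry. apply lambda_stable_coset_rel. exact Glambda.
        -- exact (coset_rel_compatible _ _
                    (sub_skew_brace_circ_subgroup K G Gsub) Gcirc).
    + intro y. symmetry. apply coset_rel_class1.
Qed.
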